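(* Let $\sigma$ be a two-qubit state that is diagonal in the Bell basis $\{|\Phi^+\rangle,|\Phi^-\rangle,|\Psi^+\rangle,|\Psi^-\rangle\}$, with systems $\hat A_i$ (first qubit) and $\hat B_i$ (second qubit). Suppose there are qubit observables $A_0,A_1,B_0,B_1$ of the form $\vec v\cdot\vec\sigma$ with unit vectors $\vec v\in\mathbb{R}^3$ such that the CHSH winning probability $\omega=\frac12+\frac18\mathrm{Tr}\big[\sigma(A_0\otimes B_0+A_0\otimes B_1+A_1\otimes B_0-A_1\otimes B_1)\big]$ lies in $\left[\frac34,\frac{2+\sqrt2}{4}\right]$. Then $$H(\hat A_i|\hat B_i)_\sigma\le 2h\left(\frac12-\frac{2\omega-1}{\sqrt2}\right)-1.$$
   Context: $H(\hat A_i|\hat B_i)_\sigma=H(\sigma_{\hat A_i\hat B_i})-H(\sigma_{\hat B_i})$ is the conditional von Neumann entropy; $h(p)=-p\log p-(1-p)\log(1-p)$ is the binary entropy, logarithms base 2. $|\Phi^\pm\rangle=(|00\rangle\pm|11\rangle)/\sqrt2$, $|\Psi^\pm\rangle=(|01\rangle\pm|10\rangle)/\sqrt2$; $\vec\sigma=(\sigma_x,\sigma_y,\sigma_z)$ are the Pauli matrices. The CHSH value $\beta$ and winning probability are related by $\omega=\frac12+\frac\beta8$. *)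

From HB Require Import structures.
From mathcomp Require Import all_boot all_order all_algebra.
From mathcomp Require Import complex mxtens.
From mathcomp Require Import Rstruct.
From Stdlib Require Import Rdefinitions Rpower.
Set Implicit Arguments. Unset Strict Implicit. Unset Printing Implicit Defensive.
Import Order.TTheory GRing.Theory Num.Theory.
Local Open Scope complex_scope.
Local Open Scope ring_scope.

Notation C := (Rdefinitions.R[i]).
Notation Real := Rdefinitions.R.

(* logarithm base 2 (Stdlib ln; ln x = 0 for x <= 0, so 0 log 0 = 0) *)
Definition log2 (x : Real) : Real := Rpower.ln x / Rpower.ln 2.

Definition eta (x : Real) : Real := - (x * log2 x).

Definition hbin (p : Real) : Real := eta p + eta (1 - p).

(* von Neumann entropy H(rho) = - sum_i lambda_i log lambda_i, where lambda_i
   are the eigenvalues of rho (diagonal of its spectral decomposition);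
   for a density matrix they are real, we take the real part. *)
Definition vN_entropy n (rho : 'M[C]_n) : Real :=
  \sum_(i < n) eta (complex.Re (spectral_diag rho 0 i)).

(* two-qubit matrices live in 'M_(2*2), indexed by mxtens_index (a, b) *)
Definition ptraceA (rho : 'M[C]_(2 * 2)) : 'M[C]_2 :=
  \matrix_(j, l) \sum_(i < 2) rho (mxtens_index (i, j)) (mxtens_index (i, l)).

Definition cond_entropy (rho : 'M[C]_(2 * 2)) : Real :=
  vN_entropy rho - vN_entropy (ptraceA rho).

Definition pauli_x : 'M[C]_2 := \matrix_(i, j) (if i == j then 0 else 1).
Definition pauli_y : 'M[C]_2 :=
  \matrix_(i, j) (if i == j then 0 else if i == 0 then - 'i else 'i).
Definition pauli_z : 'M[C]_2 :=
  \matrix_(i, j) (if i == j then (if i == 0 then 1 else -1) else 0).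

Definition obs (v : 'rV[Real]_3) : 'M[C]_2 :=
  (v 0 0)%:C *: pauli_x + (v 0 1)%:C *: pauli_y + (v 0 2)%:C *: pauli_z.

Definition unit_vec (v : 'rV[Real]_3) : Prop := \sum_(k < 3) v 0 k ^+ 2 = 1.

Definition ket (b : 'I_2) : 'cV[C]_2 := delta_mx b 0.
Definition ket2 (a b : 'I_2) : 'cV[C]_(2 * 2) := ket a *t ket b.

Definition invsqrt2 : C := (Num.sqrt (2 : Real))^-1%:C.

(* Bell basis: 0 = Phi+, 1 = Phi-, 2 = Psi+, 3 = Psi- *)
Definition bell (k : 'I_4) : 'cV[C]_(2 * 2) :=
  match val k with
  | 0 => invsqrt2 *: (ket2 0 0 + ket2 1 1)
  | 1 => invsqrt2 *: (ket2 0 0 - ket2 1 1)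
  | 2 => invsqrt2 *: (ket2 0 1 + ket2 1 0)
  | _ => invsqrt2 *: (ket2 0 1 - ket2 1 0)
  end.

Definition adj m n (M : 'M[C]_(m, n)) : 'M[C]_(n, m) := map_mx Num.conj (M^T).

Definition bell_diag (p : 'I_4 -> Real) : 'M[C]_(2 * 2) :=
  \sum_(k < 4) (p k)%:C *: (bell k *m adj (bell k)).

Definition chsh_omega (sigma : 'M[C]_(2 * 2)) (A0 A1 B0 B1 : 'M[C]_2) : Real :=
  1 / 2 + complex.Re (\tr (sigma *m (A0 *t B0 + A0 *t B1 + A1 *t B0 - A1 *t B1))) / 8.

From Pilot Require Import Defs.
From Stdlib Require Reals Lra.
From Coquelicot Require Coquelicot.

(* The Bell basis diagonalises sigma, so H(AB) = H(p), while sigma_B = I/2; hence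
   H(A|B) = H(p) - 1.  The correlation matrix of sigma is diag(tx, ty, tz) with
   tx = p0 - p1 + p2 - p3, ty = - p0 + p1 + p2 - p3, tz = p0 + p1 - p2 - p3, and
   Horodecki's bound gives beta^2 <= 4 (ti^2 + tj^2) for the two largest |ti|, |tj|.
   Reading p as the joint law of two bits whose marginals have means ti and tj,
   subadditivity of Shannon entropy gives H(p) <= h((1+ti)/2) + h((1+tj)/2).
   Finally s |-> h((1 + sqrt s)/2) is concave and decreasing, so this is at most
   2 h((1-c)/2) as soon as ti^2 + tj^2 >= 2 c^2, where c = beta / (2 sqrt 2) =
   (2 omega - 1) sqrt 2.  The concavity is used in tangent-line form at c^2, and
   proved by a sign analysis of the derivative. *)

Module RealBounds.
Import Reals Lra Coquelicot.
Local Open Scope R_scope.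

(* The entropy in nats of a [+1/-1]-valued variable of mean [t], i.e. [h((1+t)/2) ln 2]. *)
Definition ent_pm (t : R) : R :=
  - ((1 - t) / 2 * ln ((1 - t) / 2)) - (1 + t) / 2 * ln ((1 + t) / 2).

Definition artanh (t : R) : R := (ln (1 + t) - ln (1 - t)) / 2.

Lemma ln_half x : 0 < x -> ln (x / 2) = ln x - ln 2.
Proof. intros Hx. unfold Rdiv. rewrite ln_mult, ln_Rinv by lra. ring. Qed.

Lemma artanh_0 : artanh 0 = 0.
Proof. unfold artanh. rewrite Rplus_0_r, Rminus_0_r. lra. Qed.

Lemma artanh_gt0 c : 0 < c < 1 -> 0 < artanh c.
Proof.
intros Hc. unfold artanh.
assert (ln (1 - c) < ln (1 + c)) by (apply ln_increasing; lra). lra.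
Qed.

Lemma xlnx_le0 x : 0 <= x <= 1 -> x * ln x <= 0.
Proof.
intros Hx. destruct (Req_dec x 0) as [-> | Hx0]; [lra |].
assert (ln x <= 0) by (rewrite <- ln_1; apply ln_le; lra). nra.
Qed.

Lemma ent_pm_ge0 t : -1 <= t <= 1 -> 0 <= ent_pm t.
Proof.
intros Ht. unfold ent_pm.
pose proof (xlnx_le0 ((1 - t) / 2)). pose proof (xlnx_le0 ((1 + t) / 2)). lra.
Qed.

Lemma ent_pm_opp t : ent_pm (- t) = ent_pm t.
Proof.
unfold ent_pm. replace (1 - - t) with (1 + t) by ring.
replace (1 + - t) with (1 - t) by ring. ring.
Qed.

Lemma ent_pm_abs t : ent_pm (Rabs t) = ent_pm t.
Proof. unfold Rabs. destruct (Rcase_abs t); [apply ent_pm_opp | reflexivity]. Qed.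

Lemma ent_pm_1 : ent_pm 1 = 0.
Proof.
unfold ent_pm. replace ((1 - 1) / 2) with 0 by field.
replace ((1 + 1) / 2) with 1 by field. rewrite ln_1. ring.
Qed.

Lemma ent_pm_sq1 t : t * t = 1 -> ent_pm t = 0.
Proof.
intros Ht. destruct (Rle_or_lt 0 t).
- replace t with 1 by nra. apply ent_pm_1.
- replace t with (Ropp 1) by nra. rewrite ent_pm_opp. apply ent_pm_1.
Qed.

Section ConvexRoots.
Variables (f f' : R -> R) (a c b : R).
Hypothesis Hac : a < c.
Hypothesis Hf' : forall x, a <= x < b -> derivable_pt_lim f x (f' x).
Hypothesis Hmono : forall x y, a <= x -> x <= y -> y < b -> f' x <= f' y.
Hypothesis Hfa : f a = 0.
Hypothesis Hfc : f c = 0.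

Let mvt x y : a <= x -> x < y -> y < b -> exists z, f y - f x = f' z * (y - x) /\ x < z < y.
Proof. intros. apply MVT_cor2; [lra |]. intros z Hz. apply Hf'. lra. Qed.

Lemma convex_le0_between_roots t : a <= t <= c -> c < b -> f t <= 0.
Proof.
intros Ht Hcb. destruct (Req_dec t a) as [-> | Hta]; [lra |].
destruct (Req_dec t c) as [-> | Htc]; [lra |].
destruct (mvt a t) as [x [Ex Hx]]; try lra.
destruct (mvt t c) as [y [Ey Hy]]; try lra.
assert (f' x <= f' y) by (apply Hmono; lra).
rewrite Hfa in Ex. rewrite Hfc in Ey.
destruct (Rle_or_lt (f t) 0) as [| Hpos]; [assumption |].
assert (0 < f' x) by nra. nra.
Qed.

Lemma convex_ge0_beyond_root t : c <= t < b -> 0 <= f t.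
Proof.
intros Ht. destruct (Req_dec t c) as [-> | Htc]; [lra |].
destruct (mvt a c) as [x [Ex Hx]]; try lra.
destruct (mvt c t) as [y [Ey Hy]]; try lra.
assert (f' x <= f' y) by (apply Hmono; lra).
rewrite Hfa, Hfc in Ex. rewrite Hfc in Ey.
assert (f' x = 0) by nra. nra.
Qed.

End ConvexRoots.

Lemma le_max_of_derive_sign (g g' : R -> R) a c b t :
  a <= c < b -> a <= t < b ->
  (forall x, a <= x < b -> derivable_pt_lim g x (g' x)) ->
  (forall x, a <= x <= c -> 0 <= g' x) -> (forall x, c <= x < b -> g' x <= 0) ->
  g t <= g c.
Proof.
intros Hac Ht Hg Hpos Hneg.
destruct (Rtotal_order t c) as [Hlt | [-> | Hgt]]; [| lra |].
- destruct (MVT_cor2 g g' t c Hlt) as [x [E Hx]].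
  { intros x Hx. apply Hg. lra. }
  assert (0 <= g' x) by (apply Hpos; lra). nra.
- destruct (MVT_cor2 g g' c t Hgt) as [x [E Hx]].
  { intros x Hx. apply Hg. lra. }
  assert (g' x <= 0) by (apply Hneg; lra). nra.
Qed.

Lemma le_of_forall_sq_lt1 K u c : 0 < K -> c < 1 ->
  (forall t, c <= t < 1 -> K * (t * t) <= u) -> K <= u.
Proof.
intros HK Hc H. destruct (Rle_or_lt K u) as [| Hu]; [assumption | exfalso].
set (d := (K - u) / (4 * K)).
assert (Hd : 0 < d) by (apply Rdiv_lt_0_compat; lra).
assert (HKd : K * d = (K - u) / 4) by (unfold d; field; lra).
set (t := Rmax c (1 - d)).
assert (Ht : 1 - d <= t < 1) by (split; [apply Rmax_r | apply Rmax_lub_lt; lra]).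
assert (K * (t * t) <= u) by (apply H; split; [apply Rmax_l | lra]).
assert (0 <= K * ((t - 1) * (t - 1))) by (apply Rmult_le_pos; nra).
assert (0 <= K * (t - (1 - d))) by (apply Rmult_le_pos; lra).
clearbody t d. nra.
Qed.

Section Tangent.
Variable c : R.
Hypothesis Hc : 0 < c < 1.
Let K := artanh c / (2 * c).

Lemma tangent_slope_gt0 : 0 < K.
Proof. unfold K. pose proof (artanh_gt0 c Hc). apply Rdiv_lt_0_compat; lra. Qed.

(* [t |-> ent_pm t + K t^2] has derivative [- r] where [r t = artanh t - (artanh c / c) t] is
   convex and vanishes at [0] and [c]; so it increases on [[0, c]] and decreases after. *)
Lemma ent_pm_tangent_lt1 t : 0 <= t < 1 ->
  ent_pm t + K * (t * t) <= ent_pm c + K * (c * c).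
Proof.
intros Ht.
set (r x := artanh x - artanh c / c * x).
set (r' x := / (1 - x * x) - artanh c / c).
assert (Hr : forall x, 0 <= x < 1 -> derivable_pt_lim r x (r' x)).
{ intros x Hx. unfold r, r', artanh. apply is_derive_Reals.
  auto_derive; [lra |]. field. repeat split; nra. }
assert (Hr' : forall x y, 0 <= x -> x <= y -> y < 1 -> r' x <= r' y).
{ intros x y Hx Hxy Hy. unfold r'.
  apply Rplus_le_compat_r, Rinv_le_contravar; nra. }
assert (Hr0 : r 0 = 0) by (unfold r; rewrite artanh_0; ring).
assert (Hrc : r c = 0) by (unfold r; field; lra).
apply (le_max_of_derive_sign (fun x => ent_pm x + K * (x * x)) (fun x => - r x) 0 c 1);
  [lra | lra | | |].
- intros x Hx. apply is_derive_Reals. unfold ent_pm, r, K, artanh.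
  auto_derive; [lra |].
  replace ((1 + - x) * / 2) with ((1 - x) / 2) by field.
  replace ((1 + x) * / 2) with ((1 + x) / 2) by field.
  rewrite !ln_half by lra. field; repeat split; lra.
- intros x Hx. pose proof (convex_le0_between_roots r r' 0 c 1 ltac:(lra) Hr Hr' Hr0 Hrc x Hx).
  lra.
- intros x Hx. pose proof (convex_ge0_beyond_root r r' 0 c 1 ltac:(lra) Hr Hr' Hr0 Hrc x Hx).
  lra.
Qed.

Lemma ent_pm_tangent t : -1 <= t <= 1 ->
  ent_pm t + K * (t * t) <= ent_pm c + K * (c * c).
Proof.
intros Ht. rewrite <- ent_pm_abs.
replace (t * t) with (Rabs t * Rabs t) by (rewrite <- Rabs_mult; apply Rabs_pos_eq; nra).
assert (Habs : 0 <= Rabs t <= 1) by (split; [apply Rabs_pos | apply Rabs_le; lra]).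
destruct (Req_dec (Rabs t) 1) as [-> | H1]; [| apply ent_pm_tangent_lt1; lra].
rewrite ent_pm_1, Rplus_0_l, !Rmult_1_r.
apply (le_of_forall_sq_lt1 K _ c tangent_slope_gt0); [lra |].
intros x Hx. pose proof (ent_pm_ge0 x). pose proof (ent_pm_tangent_lt1 x). lra.
Qed.

End Tangent.

Lemma ent_pm_pair_le c t1 t2 : 0 < c <= 1 -> -1 <= t1 <= 1 -> -1 <= t2 <= 1 ->
  2 * (c * c) <= t1 * t1 + t2 * t2 -> ent_pm t1 + ent_pm t2 <= 2 * ent_pm c.
Proof.
intros Hc H1 H2 Hs. destruct (Req_dec c 1) as [-> | Hc1].
- rewrite ent_pm_1, (ent_pm_sq1 t1), (ent_pm_sq1 t2) by nra. lra.
- pose proof (tangent_slope_gt0 c ltac:(lra)).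
  pose proof (ent_pm_tangent c ltac:(lra) t1 H1).
  pose proof (ent_pm_tangent c ltac:(lra) t2 H2).
  nra.
Qed.

Lemma ln2_gt0 : 0 < ln 2.
Proof. rewrite <- ln_1. apply ln_increasing; lra. Qed.

Lemma eta_ln x : eta x = - (x * ln x) / ln 2.
Proof.
change (eta x) with (- (x * (ln x * / ln 2))). unfold Rdiv. ring.
Qed.

Lemma eta_half : eta (/ 2) = / 2.
Proof. rewrite eta_ln, ln_Rinv by lra. pose proof ln2_gt0. field. lra. Qed.

Lemma hbin_eta x : hbin x = eta x + eta (1 - x).
Proof. reflexivity. Qed.

Lemma hbin_ent_pm t : hbin ((1 + t) / 2) = ent_pm t / ln 2.
Proof.
rewrite hbin_eta, !eta_ln. unfold ent_pm.
replace (1 - (1 + t) / 2) with ((1 - t) / 2) by field.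
pose proof ln2_gt0. field. lra.
Qed.

Lemma hbin_ent_pm_opp t : hbin ((1 - t) / 2) = ent_pm t / ln 2.
Proof. rewrite <- ent_pm_opp. apply hbin_ent_pm. Qed.

(* Gibbs' inequality term by term: [ln y <= y - 1] at [y = a b / x]. *)
Lemma mul_ln_ratio_le x a b : 0 <= x -> x <= a -> x <= b ->
  x * (ln a + ln b - ln x) <= a * b - x.
Proof.
intros Hx Ha Hb. destruct (Req_dec x 0) as [-> | Hx0]; [nra |].
assert (Hq : 0 < a * b / x) by (apply Rdiv_lt_0_compat; nra).
pose proof (exp_ineq1_le (ln (a * b / x))) as He. rewrite exp_ln in He by exact Hq.
unfold Rdiv in He. rewrite !ln_mult, ln_Rinv in He by (try apply Rinv_0_lt_compat; nra).
apply (Rmult_le_compat_l x) in He; [| lra].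
replace (x * (a * b * / x)) with (a * b) in He by (field; lra). lra.
Qed.

Lemma xlnx_marginals_le x00 x01 x10 x11 :
  0 <= x00 -> 0 <= x01 -> 0 <= x10 -> 0 <= x11 -> x00 + x01 + x10 + x11 = 1 ->
  (x00 + x01) * ln (x00 + x01) + (x10 + x11) * ln (x10 + x11)
  + (x00 + x10) * ln (x00 + x10) + (x01 + x11) * ln (x01 + x11)
  <= x00 * ln x00 + x01 * ln x01 + x10 * ln x10 + x11 * ln x11.
Proof.
intros H00 H01 H10 H11 Hs.
pose proof (mul_ln_ratio_le x00 (x00 + x01) (x00 + x10)).
pose proof (mul_ln_ratio_le x01 (x00 + x01) (x01 + x11)).
pose proof (mul_ln_ratio_le x10 (x10 + x11) (x00 + x10)).
pose proof (mul_ln_ratio_le x11 (x10 + x11) (x01 + x11)).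
assert (Hprod : (x00 + x01 + (x10 + x11)) * (x00 + x10 + (x01 + x11)) = 1).
{ replace (x00 + x01 + (x10 + x11)) with 1 by lra.
  replace (x00 + x10 + (x01 + x11)) with 1 by lra. ring. }
nra.
Qed.

Lemma eta_sum_le_marginals x00 x01 x10 x11 :
  0 <= x00 -> 0 <= x01 -> 0 <= x10 -> 0 <= x11 -> x00 + x01 + x10 + x11 = 1 ->
  eta x00 + eta x01 + eta x10 + eta x11 <= hbin (x00 + x01) + hbin (x00 + x10).
Proof.
intros H00 H01 H10 H11 Hs. rewrite !hbin_eta, !eta_ln.
replace (1 - (x00 + x01)) with (x10 + x11) by lra.
replace (1 - (x00 + x10)) with (x01 + x11) by lra.
pose proof (xlnx_marginals_le x00 x01 x10 x11 H00 H01 H10 H11 Hs).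
pose proof ln2_gt0. unfold Rdiv. rewrite <- !Rmult_plus_distr_r.
apply Rmult_le_compat_r; [left; apply Rinv_0_lt_compat |]; lra.
Qed.

Lemma eta_sum_le_pair e c t1 t2 : 0 < c <= 1 -> -1 <= t1 <= 1 -> -1 <= t2 <= 1 ->
  2 * (c * c) <= t1 * t1 + t2 * t2 -> e <= ent_pm t1 / ln 2 + ent_pm t2 / ln 2 ->
  e <= 2 * hbin ((1 - c) / 2).
Proof.
intros Hc H1 H2 Hs He. rewrite hbin_ent_pm_opp.
pose proof (ent_pm_pair_le c t1 t2 Hc H1 H2 Hs). pose proof ln2_gt0.
apply (Rle_trans _ _ _ He). unfold Rdiv. rewrite <- Rmult_plus_distr_r, <- Rmult_assoc.
apply Rmult_le_compat_r; [left; apply Rinv_0_lt_compat |]; lra.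
Qed.

Lemma bell_eta_sum_le p0 p1 p2 p3 tx ty tz c s :
  0 <= p0 -> 0 <= p1 -> 0 <= p2 -> 0 <= p3 -> p0 + p1 + p2 + p3 = 1 ->
  tx = p0 - p1 + p2 - p3 -> ty = - p0 + p1 + p2 - p3 -> tz = p0 + p1 - p2 - p3 ->
  0 < c <= 1 -> 2 * (c * c) <= s ->
  s <= tx * tx + tz * tz \/ s <= tx * tx + ty * ty \/ s <= ty * ty + tz * tz ->
  eta p0 + eta p1 + eta p2 + eta p3 <= 2 * hbin ((1 - c) / 2).
Proof.
intros H0 H1 H2 H3 Hs -> -> -> Hc Hcs Hpair.
destruct Hpair as [Hpair | [Hpair | Hpair]].
- apply (eta_sum_le_pair _ c (p0 - p1 + p2 - p3) (p0 + p1 - p2 - p3)); try lra.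
  pose proof (eta_sum_le_marginals p0 p1 p2 p3 H0 H1 H2 H3 Hs).
  rewrite <- !hbin_ent_pm.
  replace ((1 + (p0 - p1 + p2 - p3)) / 2) with (p0 + p2) by lra.
  replace ((1 + (p0 + p1 - p2 - p3)) / 2) with (p0 + p1) by lra. lra.
- apply (eta_sum_le_pair _ c (p0 - p1 + p2 - p3) (- p0 + p1 + p2 - p3)); try lra.
  pose proof (eta_sum_le_marginals p0 p2 p3 p1 H0 H2 H3 H1 ltac:(lra)).
  rewrite <- hbin_ent_pm, <- hbin_ent_pm_opp.
  replace ((1 + (p0 - p1 + p2 - p3)) / 2) with (p0 + p2) by lra.
  replace ((1 - (- p0 + p1 + p2 - p3)) / 2) with (p0 + p3) by lra. lra.
- apply (eta_sum_le_pair _ c (p0 + p1 - p2 - p3) (- p0 + p1 + p2 - p3)); try lra.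
  pose proof (eta_sum_le_marginals p0 p1 p3 p2 H0 H1 H3 H2 ltac:(lra)).
  rewrite <- hbin_ent_pm, <- hbin_ent_pm_opp.
  replace ((1 + (p0 + p1 - p2 - p3)) / 2) with (p0 + p1) by lra.
  replace ((1 - (- p0 + p1 + p2 - p3)) / 2) with (p0 + p3) by lra. lra.
Qed.

Lemma cauchy_schwarz3 a1 a2 a3 z1 z2 z3 : a1 * a1 + a2 * a2 + a3 * a3 = 1 ->
  (a1 * z1 + a2 * z2 + a3 * z3) * (a1 * z1 + a2 * z2 + a3 * z3)
  <= z1 * z1 + z2 * z2 + z3 * z3.
Proof.
intros Ha.
pose proof (Rle_0_sqr (a1 * z2 - a2 * z1)). pose proof (Rle_0_sqr (a1 * z3 - a3 * z1)).
pose proof (Rle_0_sqr (a2 * z3 - a3 * z2)). unfold Rsqr in *.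
replace (z1 * z1 + z2 * z2 + z3 * z3)
  with ((a1 * a1 + a2 * a2 + a3 * a3) * (z1 * z1 + z2 * z2 + z3 * z3)) by (rewrite Ha; ring).
nra.
Qed.

(* For orthogonal [a], [b] the first basis vector has a projection of squared
   norm at most 1 on the plane they span. *)
Lemma orthogonal_coord_le a1 a2 a3 b1 b2 b3 : a1 * b1 + a2 * b2 + a3 * b3 = 0 ->
  a1 * a1 * (b1 * b1 + b2 * b2 + b3 * b3) + b1 * b1 * (a1 * a1 + a2 * a2 + a3 * a3)
  <= (a1 * a1 + a2 * a2 + a3 * a3) * (b1 * b1 + b2 * b2 + b3 * b3).
Proof.
intros Hab.
assert (Hb1 : a1 * b1 * (a1 * b1) = (a2 * b2 + a3 * b3) * (a2 * b2 + a3 * b3))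
  by (replace (a1 * b1) with (- (a2 * b2 + a3 * b3)) by lra; ring).
pose proof (Rle_0_sqr (a2 * b3 - a3 * b2)). unfold Rsqr in *. nra.
Qed.

Lemma weighted_sum_le_two_largest lx ly lz sx sy sz S : lz <= lx -> lz <= ly ->
  sx <= S -> sy <= S -> sx + sy + sz = 2 * S -> lx * sx + ly * sy + lz * sz <= (lx + ly) * S.
Proof. intros. replace sz with (2 * S - sx - sy) by lra. nra. Qed.

(* Horodecki's bound for a diagonal correlation matrix [diag(lx, ly, lz)] with [lz]
   its smallest entry: here [u = b0 + b1] and [w = b0 - b1] are orthogonal with
   [|u|^2 + |w|^2 = 4], and [x], [y] are bounded by [|T u|], [|T w|]. *)
Lemma horodecki_core lx ly lz ux uy uz wx wy wz x y :
  0 <= lz -> lz <= lx -> lz <= ly ->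
  (ux * ux + uy * uy + uz * uz) + (wx * wx + wy * wy + wz * wz) = 4 ->
  ux * wx + uy * wy + uz * wz = 0 ->
  x * x <= lx * (ux * ux) + ly * (uy * uy) + lz * (uz * uz) ->
  y * y <= lx * (wx * wx) + ly * (wy * wy) + lz * (wz * wz) ->
  (x + y) * (x + y) <= 4 * (lx + ly).
Proof.
intros Hlz Hlx Hly Hsum Horth Hx Hy.
set (U := ux * ux + uy * uy + uz * uz) in *. set (W := wx * wx + wy * wy + wz * wz) in *.
assert (Hmax : forall v1 v2 v3, lx * (v1 * v1) + ly * (v2 * v2) + lz * (v3 * v3)
  <= (lx + ly) * (v1 * v1 + v2 * v2 + v3 * v3)) by (intros; nra).
destruct (Req_dec U 0) as [HU0 | HU0].
{ assert (x = 0) by (unfold U in HU0; nra). subst x.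
  pose proof (Hmax wx wy wz) as HW. fold W in HW. nra. }
destruct (Req_dec W 0) as [HW0 | HW0].
{ assert (y = 0) by (unfold W in HW0; nra). subst y.
  pose proof (Hmax ux uy uz) as HU. fold U in HU. nra. }
assert (HUW : 0 < U * W) by (unfold U, W in *; apply Rmult_lt_0_compat; nra).
assert (Hsx := orthogonal_coord_le ux uy uz wx wy wz Horth).
assert (Hsy := orthogonal_coord_le uy ux uz wy wx wz ltac:(lra)).
assert (Hsz := orthogonal_coord_le uz ux uy wz wx wy ltac:(lra)).
fold U W in Hsx. replace (uy * uy + ux * ux + uz * uz) with U in Hsy by (unfold U; ring).
replace (wy * wy + wx * wx + wz * wz) with W in Hsy by (unfold W; ring).
replace (uz * uz + ux * ux + uy * uy) with U in Hsz by (unfold U; ring).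
replace (wz * wz + wx * wx + wy * wy) with W in Hsz by (unfold W; ring).
assert (Hl : lx * (ux * ux * W + wx * wx * U) + ly * (uy * uy * W + wy * wy * U)
  + lz * (uz * uz * W + wz * wz * U) <= (lx + ly) * (U * W)).
{ apply weighted_sum_le_two_largest; try lra. unfold U, W; ring. }
assert (Hxy : x * x * W + y * y * U <= (lx + ly) * (U * W)).
{ assert (x * x * W <= (lx * (ux * ux) + ly * (uy * uy) + lz * (uz * uz)) * W)
    by (apply Rmult_le_compat_r; unfold W; nra).
  assert (y * y * U <= (lx * (wx * wx) + ly * (wy * wy) + lz * (wz * wz)) * U)
    by (apply Rmult_le_compat_r; unfold U; nra).
  nra. }
(* weighted Cauchy-Schwarz: [U W (x + y)^2 <= (U + W) (x^2 W + y^2 U)] *)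
pose proof (Rle_0_sqr (x * W - y * U)). unfold Rsqr in *.
apply (Rmult_le_reg_l (U * W)); [exact HUW |]. nra.
Qed.

Lemma chsh_sq_le tx ty tz a0x a0y a0z a1x a1y a1z b0x b0y b0z b1x b1y b1z beta :
  a0x * a0x + a0y * a0y + a0z * a0z = 1 -> a1x * a1x + a1y * a1y + a1z * a1z = 1 ->
  b0x * b0x + b0y * b0y + b0z * b0z = 1 -> b1x * b1x + b1y * b1y + b1z * b1z = 1 ->
  beta = (tx * a0x * b0x + ty * a0y * b0y + tz * a0z * b0z)
       + (tx * a0x * b1x + ty * a0y * b1y + tz * a0z * b1z)
       + (tx * a1x * b0x + ty * a1y * b0y + tz * a1z * b0z)
       - (tx * a1x * b1x + ty * a1y * b1y + tz * a1z * b1z) ->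
  (beta / 2) * (beta / 2) <= tx * tx + tz * tz \/
  (beta / 2) * (beta / 2) <= tx * tx + ty * ty \/
  (beta / 2) * (beta / 2) <= ty * ty + tz * tz.
Proof.
intros Ha0 Ha1 Hb0 Hb1 ->.
set (ux := b0x + b1x). set (uy := b0y + b1y). set (uz := b0z + b1z).
set (wx := b0x - b1x). set (wy := b0y - b1y). set (wz := b0z - b1z).
set (x := a0x * (tx * ux) + a0y * (ty * uy) + a0z * (tz * uz)).
set (y := a1x * (tx * wx) + a1y * (ty * wy) + a1z * (tz * wz)).
(* [beta = a0 . T (b0 + b1) + a1 . T (b0 - b1)] with [T = diag (tx, ty, tz)] *)
match goal with |- context [?b / 2] =>
  replace b with (x + y) by (unfold x, y, ux, uy, uz, wx, wy, wz; ring) end.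
assert (Hsum : ux * ux + uy * uy + uz * uz + (wx * wx + wy * wy + wz * wz) = 4)
  by (unfold ux, uy, uz, wx, wy, wz; nra).
assert (Horth : ux * wx + uy * wy + uz * wz = 0) by (unfold ux, uy, uz, wx, wy, wz; nra).
assert (Hx : x * x <= tx * tx * (ux * ux) + ty * ty * (uy * uy) + tz * tz * (uz * uz))
  by (pose proof (cauchy_schwarz3 a0x a0y a0z (tx * ux) (ty * uy) (tz * uz) Ha0); unfold x; nra).
assert (Hy : y * y <= tx * tx * (wx * wx) + ty * ty * (wy * wy) + tz * tz * (wz * wz))
  by (pose proof (cauchy_schwarz3 a1x a1y a1z (tx * wx) (ty * wy) (tz * wz) Ha1); unfold y; nra).
clearbody x y ux uy uz wx wy wz.
assert (Hx2 : 0 <= tx * tx) by nra. assert (Hy2 : 0 <= ty * ty) by nra.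
assert (Hz2 : 0 <= tz * tz) by nra.
assert (Hcases : (x + y) * (x + y) <= 4 * (tx * tx + tz * tz) \/
  (x + y) * (x + y) <= 4 * (tx * tx + ty * ty) \/ (x + y) * (x + y) <= 4 * (ty * ty + tz * tz)).
{ destruct (Rle_or_lt (tz * tz) (tx * tx)), (Rle_or_lt (tz * tz) (ty * ty)),
    (Rle_or_lt (ty * ty) (tx * tx)).
  all: first
    [ right; left; apply (horodecki_core (tx * tx) (ty * ty) (tz * tz) ux uy uz wx wy wz); lra
    | left; apply (horodecki_core (tx * tx) (tz * tz) (ty * ty) ux uz uy wx wz wy); lra
    | right; right; apply (horodecki_core (ty * ty) (tz * tz) (tx * tx) uy uz ux wy wz wx); lra ]. }
replace ((x + y) / 2 * ((x + y) / 2)) with ((x + y) * (x + y) / 4) by field. lra.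
Qed.

End RealBounds.

From HB Require Import structures.
From mathcomp Require Import all_boot all_order all_algebra.
From mathcomp Require Import complex mxtens Rstruct ring lra.
Import Order.TTheory GRing.Theory Num.Theory.
Local Open Scope complex_scope.
Local Open Scope ring_scope.

Notation mi := (@mxtens_index 2 2).
Notation k0 := (@Ordinal 4 0 isT).
Notation k1 := (@Ordinal 4 1 isT).
Notation k2 := (@Ordinal 4 2 isT).
Notation k3 := (@Ordinal 4 3 isT).
Notation i0 := (@Ordinal 2 0 isT).
Notation i1 := (@Ordinal 2 1 isT).

Lemma sum2 (V : nmodType) (F : 'I_2 -> V) : \sum_(k < 2) F k = F i0 + F i1.
Proof. by rewrite !big_ord_recl big_ord0 addr0; congr (_ + _); congr F; apply: val_inj. Qed.

Lemma sum3 (V : nmodType) (F : 'I_3 -> V) : \sum_(k < 3) F k = F 0 + F 1 + F 2.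
Proof.
rewrite !big_ord_recl big_ord0 addr0 !addrA.
by congr (_ + _ + _); congr F; apply: val_inj.
Qed.

Lemma sum4 (V : nmodType) (F : 'I_4 -> V) : \sum_(k < 4) F k = F k0 + F k1 + F k2 + F k3.
Proof.
rewrite !big_ord_recl big_ord0 addr0 !addrA.
by congr (_ + _ + _ + _); congr F; apply: val_inj.
Qed.

Lemma sum_tens_index (V : nmodType) (F : 'I_(2 * 2) -> V) :
  \sum_(k < 2 * 2) F k = \sum_(a < 2) \sum_(b < 2) F (mi (a, b)).
Proof.
rewrite pair_big /= (reindex mi) /=; last first.
  by exists (@mxtens_unindex 2 2) => x _; [apply: mxtens_indexK | apply: mxtens_unindexK].
by apply: eq_bigr => -[a b] _.
Qed.

Lemma conj_real_complex (x : Real) : Num.conj (x%:C) = x%:C.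
Proof. by rewrite -[LHS]/(conjc _) conjc_real. Qed.

Lemma ReD (R : rcfType) (x y : R[i]) : complex.Re (x + y) = complex.Re x + complex.Re y.
Proof. by case: x; case: y. Qed.

Lemma ReB (R : rcfType) (x y : R[i]) : complex.Re (x - y) = complex.Re x - complex.Re y.
Proof. by case: x; case: y. Qed.

Definition bell_coef (k : 'I_4) (a b : 'I_2) : Real :=
  match val k with
  | 0 => ((a == 0) && (b == 0))%:R + ((a == 1) && (b == 1))%:R
  | 1 => ((a == 0) && (b == 0))%:R - ((a == 1) && (b == 1))%:R
  | 2 => ((a == 0) && (b == 1))%:R + ((a == 1) && (b == 0))%:R
  | _ => ((a == 0) && (b == 1))%:R - ((a == 1) && (b == 0))%:R
  end.

Lemma bell_entry k a b j :
  bell k (mi (a, b)) j = ((Num.sqrt 2)^-1 * bell_coef k a b)%:C.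
Proof.
have ord1_eq (x y : 'I_1) : (x == y) = true by rewrite (ord1 x) (ord1 y).
rewrite (ord1 j) rmorphM /=.
case: k => [[|[|[|[|k]]]] Hk]; rewrite /bell /bell_coef /= !mxE mxtens_indexK /=
  !ord1_eq !andbT -!natrM !mulnb ?rmorphD ?rmorphB !rmorph_nat //.
all: by rewrite ?rmorphN ?rmorph_nat.
Qed.

Lemma inv_sqrt2_sq : (Num.sqrt 2)^-1 * (Num.sqrt 2)^-1 = 2^-1 :> Real.
Proof. by rewrite -invfM -expr2 sqr_sqrtr // ler0n. Qed.

Lemma mul_inv_sqrt2 (x y : Real) :
  ((Num.sqrt 2)^-1 * x) * ((Num.sqrt 2)^-1 * y) = 2^-1 * (x * y).
Proof. by rewrite mulrACA inv_sqrt2_sq. Qed.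

Lemma bell_diag_entry p a b c d : bell_diag p (mi (a, b)) (mi (c, d)) =
  (2^-1 * \sum_(k < 4) p k * (bell_coef k a b * bell_coef k c d))%:C.
Proof.
rewrite /bell_diag summxE rmorphM rmorph_sum mulr_sumr; apply: eq_bigr => k _.
rewrite !mxE big_ord1 !mxE !bell_entry conj_real_complex -!rmorphM; congr (_%:C).
rewrite -inv_sqrt2_sq; ring.
Qed.

Lemma ptraceA_bell_diag p : \sum_(k < 4) p k = 1 -> ptraceA (bell_diag p) = (2^-1 : Real)%:C%:M.
Proof.
rewrite sum4 => p_sum.
apply/matrixP => j l; rewrite !mxE sum2 !bell_diag_entry -rmorphD -rmorphMn; congr (_%:C).
rewrite !sum4.
case: j => [[|[|//]] Hj]; case: l => [[|[|//]] Hl]; rewrite /bell_coef /=.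
all: rewrite ?mulr1n ?mulr0n; lra.
Qed.

Lemma char_poly_conj (R : comUnitRingType) n (P A : 'M[R]_n) : P \in unitmx ->
  char_poly (invmx P *m A *m P) = char_poly A.
Proof.
move=> P_unit; rewrite /char_poly.
have -> : char_poly_mx (invmx P *m A *m P) =
    map_mx polyC (invmx P) *m char_poly_mx A *m map_mx polyC P.
  rewrite /char_poly_mx mulmxBr mulmxBl -!map_mxM; congr (_ - _).
  by rewrite -mulmxA -scalar_mxC mulmxA -map_mxM mulVmx // map_mx1 mul1mx.
rewrite !det_mulmx !det_map_mx mulrC mulrA -rmorphM.
by rewrite -det_mulmx mulmxV // det1 rmorph1 mul1r.
Qed.

Lemma char_poly_diag (R : comNzRingType) n (d : 'rV[R]_n) :
  char_poly (diag_mx d) = \prod_(x <- [seq d 0 i | i <- index_enum 'I_n]) ('X - x%:P).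
Proof.
rewrite char_poly_trig ?diag_mx_is_trig // big_map.
by apply: eq_bigr => i _; rewrite mxE eqxx mulr1n.
Qed.

(* Any unitary diagonalisation lists the same eigenvalues as [spectral_diag A], up to
   order, since both come from the characteristic polynomial. *)
Lemma vN_entropy_unitary_diag n (A U : 'M[C]_n) (d : 'rV[C]_n) : U \is unitarymx ->
  A = invmx U *m diag_mx d *m U -> vN_entropy A = \sum_(i < n) Defs.eta (complex.Re (d 0 i)).
Proof.
move=> U_unitary A_def.
have A_normal : A \is normalmx by apply/orthomx_spectral_subproof; exists (U, d).
have spec_def := orthomx_spectralP A_normal.
have char_spec : char_poly A = char_poly (diag_mx (spectral_diag A)).
  by rewrite {1}spec_def char_poly_conj // spectral_unit.
have char_d : char_poly A = char_poly (diag_mx d).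
  by rewrite A_def char_poly_conj // unitarymx_unit.
have := etrans (esym char_spec) char_d; rewrite !char_poly_diag => same_char.
rewrite /vN_entropy -(big_map (fun i => spectral_diag A 0 i) xpredT (fun x => Defs.eta (complex.Re x))).
by rewrite (perm_big _ (prod_XsubC_eq same_char)) big_map.
Qed.

Definition bell_mx : 'M[C]_(2 * 2) := \matrix_(i, k) bell k i 0.

Lemma bell_mx_unitary : adj bell_mx \is unitarymx.
Proof.
apply/unitarymxP; rewrite /adj trmxCK; apply/matrixP => k l.
rewrite !mxE sum_tens_index !sum2 !mxE !bell_entry !conj_real_complex -!rmorphM -!rmorphD.
rewrite -(@rmorph_nat _ _ (real_complex Real)); congr (_%:C).
rewrite !mul_inv_sqrt2.
case: k => [[|[|[|[|//]]]] Hk]; case: l => [[|[|[|[|//]]]] Hl]; rewrite /bell_coef /=.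
all: rewrite ?mulr1n ?mulr0n; lra.
Qed.

Lemma vN_entropy_bell_diag p : vN_entropy (bell_diag p) = \sum_(k < 4) Defs.eta (p k).
Proof.
rewrite (@vN_entropy_unitary_diag _ _ (adj bell_mx) (\row_k (p k)%:C) bell_mx_unitary).
  by apply: eq_bigr => i _; rewrite mxE.
rewrite invmx_unitary ?bell_mx_unitary // /adj trmxCK.
apply/matrixP => i j; rewrite mul_mx_diag /bell_diag summxE !mxE.
apply: eq_bigr => k _; rewrite !mxE big_ord1 !mxE.
by rewrite mulrA [_ * (p k)%:C]mulrC.
Qed.

Lemma vN_entropy_scalar n (a : C) : vN_entropy (a%:M : 'M[C]_n) = Defs.eta (complex.Re a) *+ n.
Proof.
have id_unitary : (1%:M : 'M[C]_n) \is unitarymx.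
  by apply/unitarymxP; rewrite trmx1 map_mx1 mulmx1.
rewrite (@vN_entropy_unitary_diag _ _ 1%:M (const_mx a) id_unitary); last first.
  by rewrite invmx1 mul1mx mulmx1; apply/matrixP => i j; rewrite !mxE.
by rewrite (eq_bigr (fun _ => Defs.eta (complex.Re a))) ?sumr_const ?card_ord // => i _; rewrite mxE.
Qed.

Lemma cond_entropy_bell_diag p : \sum_(k < 4) p k = 1 ->
  cond_entropy (bell_diag p) = Defs.eta (p k0) + Defs.eta (p k1) + Defs.eta (p k2) + Defs.eta (p k3) - 1.
Proof.
move=> p_sum; rewrite /cond_entropy vN_entropy_bell_diag ptraceA_bell_diag //.
have eta_half : Defs.eta 2^-1 = 2^-1 := RealBounds.eta_half.
by rewrite vN_entropy_scalar sum4 /= eta_half mulr2n; congr (_ - _); field.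
Qed.

Definition obs_re (v : 'rV[Real]_3) (i j : 'I_2) : Real :=
  if i == j then (if i == 0 then v 0 2 else - v 0 2) else v 0 0.

Definition obs_im (v : 'rV[Real]_3) (i j : 'I_2) : Real :=
  if i == j then 0 else (if i == 0 then - v 0 1 else v 0 1).

Lemma obs_entry v i j : obs v i j = obs_re v i j +i* obs_im v i j.
Proof.
rewrite /obs /obs_re /obs_im !mxE.
case: i => [[|[|//]] Hi]; case: j => [[|[|//]] Hj] /=.
all: by apply/eqP; rewrite eq_complex /=; apply/andP; split; apply/eqP; ring.
Qed.

(* The correlation matrix [Tr(bell_diag p (sigma_i (x) sigma_j))] is
   [diag (corr_x p, corr_y p, corr_z p)]. *)
Definition corr_x (p : 'I_4 -> Real) := p k0 - p k1 + p k2 - p k3.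
Definition corr_y (p : 'I_4 -> Real) := - p k0 + p k1 + p k2 - p k3.
Definition corr_z (p : 'I_4 -> Real) := p k0 + p k1 - p k2 - p k3.

Definition corr p (u w : 'rV[Real]_3) :=
  corr_x p * u 0 0 * w 0 0 + corr_y p * u 0 1 * w 0 1 + corr_z p * u 0 2 * w 0 2.

Lemma Re_trace_bell_diag_obs p u w :
  complex.Re (\tr (bell_diag p *m (obs u *t obs w))) = corr p u w.
Proof.
rewrite /mxtrace sum_tens_index; under eq_bigr do under eq_bigr do rewrite mxE sum_tens_index.
rewrite !sum2 !bell_diag_entry !tensmxE !obs_entry !sum4.
by rewrite /bell_coef /obs_re /obs_im /corr /corr_x /corr_y /corr_z /=; field.
Qed.

(* [chsh_omega] is elaborated with Stdlib's operations on [R] (the scope of its result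
   type), which [RealsE] rewrites into MathComp's. *)
Lemma chsh_omega_bell_diag p a0 a1 b0 b1 :
  chsh_omega (bell_diag p) (obs a0) (obs a1) (obs b0) (obs b1) =
  1 / 2 + (corr p a0 b0 + corr p a0 b1 + corr p a1 b0 - corr p a1 b1) / 8.
Proof.
rewrite /chsh_omega !mulmxDr mulmxN !mxtraceD raddfN /= ReB !ReD.
by rewrite !Re_trace_bell_diag_obs !RealsE /=.
Qed.

Lemma chsh_rescale (omega beta : Real) : omega = 1 / 2 + beta / 8 ->
  3 / 4 <= omega <= (2 + Num.sqrt 2) / 4 ->
  let c := beta / (2 * Num.sqrt 2) in
  [/\ 0 < c, c <= 1, 1 / 2 - (2 * omega - 1) / Num.sqrt 2 = (1 - c) / 2
    & 2 * (c * c) = beta / 2 * (beta / 2)].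
Proof.
move=> -> /andP[omega_ge omega_le] c.
have s_gt0 : 0 < Num.sqrt 2 :> Real by rewrite sqrtr_gt0.
have s_sq : Num.sqrt 2 * Num.sqrt 2 = 2 :> Real by rewrite -expr2 sqr_sqrtr ?ler0n.
have s_neq0 : Num.sqrt 2 != 0 :> Real by rewrite gt_eqF.
split; rewrite /c.
- by rewrite divr_gt0 ?mulr_gt0 //; lra.
- by rewrite ler_pdivrMr ?mulr_gt0 //; lra.
- by field.
- by rewrite mulf_div mulrACA s_sq; field.
Qed.

Lemma unit_vecE v : unit_vec v -> v 0 0 * v 0 0 + v 0 1 * v 0 1 + v 0 2 * v 0 2 = 1.
Proof. by rewrite /unit_vec sum3 !expr2. Qed.

Theorem lemma1 (p : 'I_4 -> Real) (a0 a1 b0 b1 : 'rV[Real]_3) :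
  (forall k, 0 <= p k) -> \sum_(k < 4) p k = 1 ->
  unit_vec a0 -> unit_vec a1 -> unit_vec b0 -> unit_vec b1 ->
  let omega := chsh_omega (bell_diag p) (obs a0) (obs a1) (obs b0) (obs b1) in
  3 / 4 <= omega <= (2 + Num.sqrt 2) / 4 ->
  cond_entropy (bell_diag p) <=
    2 * hbin (1 / 2 - (2 * omega - 1) / Num.sqrt 2) - 1.
Proof.
move=> p_ge0 p_sum ua0 ua1 ub0 ub1 omega omega_bounds.
set beta := corr p a0 b0 + corr p a0 b1 + corr p a1 b0 - corr p a1 b1.
have [c_gt0 c_le1 -> c_sq] := chsh_rescale _ beta (chsh_omega_bell_diag p a0 a1 b0 b1) omega_bounds.
rewrite cond_entropy_bell_diag // lerD2r; apply/RleP.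
(* Stdlib's and MathComp's operations on [R] are convertible, so the real bounds apply
   as they stand; only the order relations need the [RleP]/[RltP] views. *)
apply: (RealBounds.bell_eta_sum_le _ _ _ _ (corr_x p) (corr_y p) (corr_z p) _
  (beta / 2 * (beta / 2))) => //.
1-4: exact/RleP.
- by rewrite sum4 in p_sum.
- by split; [exact/RltP | exact/RleP].
- exact: RIneq.Req_le c_sq.
- exact: (RealBounds.chsh_sq_le (corr_x p) (corr_y p) (corr_z p)
    (a0 0 0) (a0 0 1) (a0 0 2) (a1 0 0) (a1 0 1) (a1 0 2)
    (b0 0 0) (b0 0 1) (b0 0 2) (b1 0 0) (b1 0 1) (b1 0 2) beta
    (unit_vecE _ ua0) (unit_vecE _ ua1) (unit_vecE _ ub0) (unit_vecE _ ub1) erefl).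
Qed.
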